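(* For a thermodynamic Stephani universe with $b''(R)=0$, one has $A_1=0$; if moreover $A_2=c_2$ is constant, then $\chi(\pi)=\lambda\pi+\lambda-\frac23$ with $\lambda=1+c_2/3$. If $\lambda\in(\lambda_\eta,5/6)$, $\lambda_\eta=(13-2\sqrt{30})/3$, then for all $\pi\in(0,1)$: $0<\chi(\pi)<1$, $\zeta(\pi)>0$ and $\eta(\pi)>0$. In particular, if $b''=0$ and $9+16A_1+12A_2=0$, then $A_2=-3/4$, $\lambda=3/4$, $\chi(\pi)=(9\pi+1)/12$, and these inequalities hold on all of $(0,1)$.
   Context: Thermodynamic Stephani universe: $ds^2=-\alpha^2dt^2+\Omega^2(dx^2+dy^2+dz^2)$, $L=R(t)/(1+b(t)w)$, $\Omega=\frac{w}{2z}L$, $\alpha=R\partial_R\ln L$, $w=2z/(1+\frac\varepsilon4r^2)$, $\varepsilon\in\{0,\pm1\}$; functions of $t$ regarded as functions of $R$ (prime $=d/dR$); $\rho=\frac{3}{R^2}(\dot R^2+\varepsilon-4b^2)$, $a(R)=-R\rho'(R)/(3\rho)$, $A_1=-\frac{Rb''}{a^2b'}$, $A_2=\frac{Rb''}{ab'}-\frac{a'R}{a^2}-\frac1a$, and the indicatrix is $\chi=\pi+\frac13+\frac13(\pi+1)[(\pi+1)A_1+A_2]$, $\pi=p/\rho$. $\zeta(\pi)=(1+\pi)(\chi-\pi)\chi'+2\chi(1-\chi)$, $\eta(\pi)=(2\pi+1)\chi-\pi$. *)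

From Stdlib Require Import Reals Lra.
From Coquelicot Require Import Coquelicot.
Open Scope R_scope.

(* All functions of t are regarded as functions of the scale factor R (> 0).
   Rdot : R -> R is  dR/dt  expressed as a function of R, b : R -> R. *)

Definition rho (eps : R) (Rdot b : R -> R) (x : R) : R :=
  3 / x ^ 2 * (Rdot x ^ 2 + eps - 4 * b x ^ 2).

Definition a_fun (eps : R) (Rdot b : R -> R) (x : R) : R :=
  - x * Derive (rho eps Rdot b) x / (3 * rho eps Rdot b x).

Definition A1f (a b : R -> R) (x : R) : R :=
  - x * Derive (Derive b) x / (a x ^ 2 * Derive b x).

Definition A2f (a b : R -> R) (x : R) : R :=
  x * Derive (Derive b) x / (a x * Derive b x)
  - Derive a x * x / a x ^ 2 - 1 / a x.

Definition chi (a b : R -> R) (x : R) (p : R) : R :=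
  p + 1/3 + 1/3 * (p + 1) * ((p + 1) * A1f a b x + A2f a b x).

Definition zeta (ch : R -> R) (p : R) : R :=
  (1 + p) * (ch p - p) * Derive ch p + 2 * ch p * (1 - ch p).

Definition eta (ch : R -> R) (p : R) : R :=
  (2 * p + 1) * ch p - p.

Definition lambda_eta : R := (13 - 2 * sqrt 30) / 3.

(* With b'' = 0 the coefficient A_1 vanishes, so a constant A_2 makes the
   indicatrix affine, chi(pi) = lam (pi + 1) - 2/3.  The three inequalities
   then reduce to elementary facts about this line: chi stays in (0, 1) for
   2/3 < lam < 5/6, zeta is a concave quadratic in pi that is positive at
   pi = 0 and pi = 1, and eta is a quadratic in pi whose discriminant
   lam^2 - 26/3 lam + 49/9 has roots (13 -+ 2 sqrt 30)/3, hence is negative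
   once lam exceeds lambda_eta. *)
From Stdlib Require Import Reals Lra FunctionalExtensionality.
From Coquelicot Require Import Coquelicot.
Open Scope R_scope.

Definition chi_affine (lam p : R) : R := lam * p + lam - 2/3.

Lemma A1f_eq0 (a b : R -> R) (x : R) :
  Derive (Derive b) x = 0 -> A1f a b x = 0.
Proof. intros Hb''. unfold A1f. rewrite Hb''. unfold Rdiv. ring. Qed.

Lemma chi_eq_affine (a b : R -> R) (x c2 : R) :
  A1f a b x = 0 -> A2f a b x = c2 -> chi a b x = chi_affine (1 + c2 / 3).
Proof.
  intros HA1 HA2. apply functional_extensionality; intro p.
  unfold chi, chi_affine. rewrite HA1, HA2. field.
Qed.

Lemma Derive_chi_affine (lam p : R) : Derive (chi_affine lam) p = lam.
Proof. apply is_derive_unique. unfold chi_affine. auto_derive; auto; ring. Qed.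

Lemma sqrt30_bounds : 27/5 < sqrt 30 < 11/2.
Proof.
  pose proof (sqrt_sqrt 30 ltac:(lra)). pose proof (sqrt_pos 30).
  split; nra.
Qed.

Lemma lambda_eta_bounds : 2/3 < lambda_eta < 3/4.
Proof. pose proof sqrt30_bounds. unfold lambda_eta. lra. Qed.

Lemma chi_affine_in_01 (lam p : R) :
  2/3 < lam < 5/6 -> 0 < p < 1 -> 0 < chi_affine lam p < 1.
Proof. intros Hlam Hp. unfold chi_affine. split; nra. Qed.

Lemma zeta_chi_affine_pos (lam p : R) :
  2/3 < lam < 5/6 -> 0 < p < 1 -> zeta (chi_affine lam) p > 0.
Proof.
  intros Hlam Hp. unfold zeta. rewrite Derive_chi_affine. unfold chi_affine.
  (* interpolate between the values at pi = 0 and pi = 1; the quadratic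
     term is -(lam^2 + lam) p (1 - p) *)
  replace ((1 + p) * (lam * p + lam - 2/3 - p) * lam
           + 2 * (lam * p + lam - 2/3) * (1 - (lam * p + lam - 2/3)))
    with ((1 - p) * ((lam - 2/3) * (10/3 - lam))
          + p * ((2 * lam - 5/3) * (4/3 - 2 * lam))
          + (lam * lam + lam) * (p * (1 - p))) by field.
  assert (0 < (lam - 2/3) * (10/3 - lam)) by nra.
  assert (0 < (2 * lam - 5/3) * (4/3 - 2 * lam)) by nra.
  assert (0 < p * (1 - p)) by nra.
  assert (0 < lam * lam + lam) by nra.
  nra.
Qed.

Lemma eta_chi_affine_pos (lam p : R) :
  lambda_eta < lam < 5/6 -> eta (chi_affine lam) p > 0.
Proof.
  intros Hlam. pose proof sqrt30_bounds.
  unfold lambda_eta in Hlam. unfold eta, chi_affine.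
  set (s := sqrt 30) in *.
  assert (Hdisc : (3 * lam - 7/3) ^ 2 - 8 * lam * (lam - 2/3) < 0).
  { assert (Hs2 : s * s = 30) by (unfold s; apply sqrt_sqrt; lra).
    assert (Hroots : (lam - (13 - 2 * s) / 3) * (lam - (13 + 2 * s) / 3)
                     = (3 * lam - 7/3) ^ 2 - 8 * lam * (lam - 2/3)
                       + 4 * (30 - s * s) / 9) by field.
    rewrite Hs2 in Hroots. nra. }
  assert (Hsq : 8 * lam * ((2 * p + 1) * (lam * p + lam - 2/3) - p)
                = (4 * lam * p + (3 * lam - 7/3)) ^ 2
                  - ((3 * lam - 7/3) ^ 2 - 8 * lam * (lam - 2/3))) by field.
  pose proof (pow2_ge_0 (4 * lam * p + (3 * lam - 7/3))).
  apply Rlt_gt, (Rmult_lt_reg_l (8 * lam)); lra.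
Qed.

Lemma chi_affine_admissible (lam p : R) :
  lambda_eta < lam < 5/6 -> 0 < p < 1 ->
  0 < chi_affine lam p < 1 /\ zeta (chi_affine lam) p > 0
  /\ eta (chi_affine lam) p > 0.
Proof.
  intros Hlam Hp. pose proof lambda_eta_bounds.
  split; [|split].
  - apply chi_affine_in_01; lra.
  - apply zeta_chi_affine_pos; lra.
  - apply eta_chi_affine_pos; lra.
Qed.

Theorem mainTheorem14
  (eps : R) (Rdot b : R -> R)
  (Heps : eps = 0 \/ eps = 1 \/ eps = -1)
  (* standing regularity / well-definedness assumptions, for R > 0 *)
  (Hrho_ne0 : forall x, 0 < x -> rho eps Rdot b x <> 0)
  (Hrho_d : forall x, 0 < x -> ex_derive (rho eps Rdot b) x)
  (Ha_d : forall x, 0 < x -> ex_derive (a_fun eps Rdot b) x)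
  (Ha_ne0 : forall x, 0 < x -> a_fun eps Rdot b x <> 0)
  (Hb_d : forall x, 0 < x -> ex_derive b x)
  (Hb_d2 : forall x, 0 < x -> ex_derive (Derive b) x)
  (Hb'_ne0 : forall x, 0 < x -> Derive b x <> 0)
  (* b''(R) = 0 *)
  (Hb'' : forall x, 0 < x -> Derive (Derive b) x = 0) :
  let a := a_fun eps Rdot b in
  (forall x, 0 < x -> A1f a b x = 0) /\
  (forall c2 : R, (forall x, 0 < x -> A2f a b x = c2) ->
     let lam := 1 + c2 / 3 in
     (forall x, 0 < x -> forall p, chi a b x p = lam * p + lam - 2/3) /\
     (lambda_eta < lam < 5/6 ->
        forall x, 0 < x -> forall p, 0 < p < 1 ->
          0 < chi a b x p < 1 /\ zeta (chi a b x) p > 0 /\ eta (chi a b x) p > 0)) /\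
  ((forall x, 0 < x -> 9 + 16 * A1f a b x + 12 * A2f a b x = 0) ->
     (forall x, 0 < x -> A2f a b x = -3/4) /\
     1 + (-3/4) / 3 = 3/4 /\
     (forall x, 0 < x -> forall p, chi a b x p = (9 * p + 1) / 12) /\
     (forall x, 0 < x -> forall p, 0 < p < 1 ->
          0 < chi a b x p < 1 /\ zeta (chi a b x) p > 0 /\ eta (chi a b x) p > 0)).
Proof.
  intros a.
  assert (HA1 : forall x, 0 < x -> A1f a b x = 0)
    by (intros x Hx; apply A1f_eq0, Hb''; exact Hx).
  assert (Hconst : forall c2, (forall x, 0 < x -> A2f a b x = c2) ->
            forall x, 0 < x -> chi a b x = chi_affine (1 + c2 / 3))
    by (intros c2 Hc2 x Hx; apply chi_eq_affine; auto).
  split; [exact HA1 | split].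
  - intros c2 Hc2 lam. split.
    + intros x Hx p. rewrite (Hconst c2 Hc2 x Hx). reflexivity.
    + intros Hlam x Hx p Hp. rewrite (Hconst c2 Hc2 x Hx).
      apply chi_affine_admissible; assumption.
  - intros H9.
    assert (HA2 : forall x, 0 < x -> A2f a b x = -3/4).
    { intros x Hx. specialize (H9 x Hx). rewrite HA1 in H9 by exact Hx. lra. }
    pose proof lambda_eta_bounds.
    split; [exact HA2 | split; [field | split]].
    + intros x Hx p. rewrite (Hconst _ HA2 x Hx). unfold chi_affine. field.
    + intros x Hx p Hp. rewrite (Hconst _ HA2 x Hx).
      apply chi_affine_admissible; [lra | assumption].
Qed.
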